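(* Under the setting below with $m\ge 3$, for every $\gamma=(\gamma_{12},\gamma_{13},\gamma_{23})\in\mathbb{C}^3$, \[s_{3m-2}\big(\mathcal{S}_3(D,\gamma)\big)\le \max\{\|M_1\|_2,\|M_2\|_2,\|M_3\|_2\}.\]
   Context: $A\in\mathbb{C}^{n\times n}$, $B\in\mathbb{C}^{n\times m}$, $C\in\mathbb{C}^{m\times n}$, $D\in\mathbb{C}^{m\times m}$; $\lambda_1,\lambda_2,\lambda_3$ are distinct complex numbers, none an eigenvalue of $A$. $s_j(\cdot)$ denotes the $j$-th largest singular value. Write $A_i^{-1}=(A-\lambda_iI_n)^{-1}$, $M_i=(D-\lambda_iI_m)-CA_i^{-1}B$, $N_{ij}=I_m+CA_i^{-1}A_j^{-1}B$, $P_{123}=CA_1^{-1}A_2^{-1}A_3^{-1}B$, and \[\mathcal{S}_3(D,\gamma)=\begin{bmatrix}M_1&\gamma_{12}N_{12}&\gamma_{13}N_{13}-\gamma_{12}\gamma_{23}P_{123}\\0&M_2&\gamma_{23}N_{23}\\0&0&M_3\end{bmatrix}.\] *)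

(* Complex numbers are modelled as R[i] (real_closed.complex)
   over a real closed field R; for R = the reals this is exactly C. *)
From HB Require Import structures.
From mathcomp Require Import all_boot all_order all_algebra.
From mathcomp Require Import complex.
Set Implicit Arguments. Unset Strict Implicit. Unset Printing Implicit Defensive.
Import Order.TTheory GRing.Theory Num.Theory.
Local Open Scope ring_scope.

Definition ctrmx (C : numClosedFieldType) p q (A : 'M[C]_(p, q)) : 'M[C]_(q, p) :=
  map_mx Num.conj A^T.

Lemma char_poly_split (C : closedFieldType) k (A : 'M[C]_k) :
  exists s : seq C, char_poly A == \prod_(z <- s) ('X - z%:P).
Proof.
have [r Hr] := closed_field_poly_normal (char_poly A).
by exists r; apply/eqP; rewrite {1}Hr (monicP (char_poly_monic A)) scale1r.
Qed.

(* the eigenvalues of a square matrix, listed with algebraic multiplicity *)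
Definition eigvals (C : numClosedFieldType) k (A : 'M[C]_k) : seq C :=
  xchoose (char_poly_split A).

Definition svals (C : numClosedFieldType) p q (A : 'M[C]_(p, q)) : seq C :=
  sort (fun x y => y <= x) [seq sqrtC z | z <- eigvals (ctrmx A *m A)].

(* s_j(A), the j-th largest singular value (1-indexed) *)
Definition singval (C : numClosedFieldType) p q (j : nat) (A : 'M[C]_(p, q)) : C :=
  nth 0 (svals A) j.-1.

Definition norm2 (C : numClosedFieldType) p q (A : 'M[C]_(p, q)) : C := singval 1 A.

Section S3.
Variables (R : rcfType) (n m : nat).
Local Notation C := (R[i]).
Variables (A : 'M[C]_n) (B : 'M[C]_(n, m)) (Cm : 'M[C]_(m, n)) (D : 'M[C]_m).

Definition Ainv (l : C) : 'M[C]_n := invmx (A - l%:M).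
Definition Mmat (l : C) : 'M[C]_m := (D - l%:M) - Cm *m Ainv l *m B.
Definition Nmat (li lj : C) : 'M[C]_m := 1%:M + Cm *m Ainv li *m Ainv lj *m B.
Definition Pmat (l1 l2 l3 : C) : 'M[C]_m :=
  Cm *m Ainv l1 *m Ainv l2 *m Ainv l3 *m B.

Definition S3 (l1 l2 l3 g12 g13 g23 : C) : 'M[C]_(m + (m + m)) :=
  block_mx (Mmat l1)
           (row_mx (g12 *: Nmat l1 l2) (g13 *: Nmat l1 l3 - (g12 * g23) *: Pmat l1 l2 l3))
           0
           (block_mx (Mmat l2) (g23 *: Nmat l2 l3) 0 (Mmat l3)).
End S3.

(* If S = [M X; 0 Y] with Y of size k, then S (x; 0) = (M x; 0), so
   ||S v|| <= ||M|| ||v|| on an m-dimensional subspace.  By the min-max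
   principle, the right singular vectors of S for singular values > ||M||
   span a space meeting that subspace only in 0; hence at most k singular
   values of S exceed ||M||.  For S_3 one has k = 2m < 3m - 2 when m >= 3. *)

From HB Require Import structures.
From mathcomp Require Import all_boot all_order all_algebra.
From mathcomp Require Import complex spectral sesquilinear.
From mathcomp Require Import zify.
Set Implicit Arguments. Unset Strict Implicit. Unset Printing Implicit Defensive.
Import Order.TTheory GRing.Theory Num.Theory.
Local Open Scope ring_scope.
Local Open Scope sesquilinear_scope.

Local Notation "''[' u ]" := (dotmx u u) : ring_scope.

Section SortNonincreasing.
Variable R : numDomainType.
Local Notation ge := (fun x y : R => y <= x).
Implicit Types (s : seq R) (x c : R).

Lemma sort_ge_sorted s : all (>= 0) s -> sorted ge (sort ge s).
Proof.
apply: (@sort_sorted_in _ [pred x : R | 0 <= x]) => x y /= x0 y0.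
by rewrite orbC real_leVge ?ger0_real.
Qed.

Lemma le_nth0_sort_ge s x : all (>= 0) s -> x \in s -> x <= nth 0 (sort ge s) 0.
Proof.
move=> s_ge0 xs; have := sort_ge_sorted s_ge0.
have : x \in sort ge s by rewrite mem_sort.
case: (sort ge s) => [//|y t] /=; rewrite inE => /orP[/eqP -> _ //|xt].
by rewrite (path_sortedE ge_trans) => /andP[/allP /(_ x xt)].
Qed.

Lemma lt_nth_sort_ge_count s c i : all (>= 0) s -> 0 <= c ->
  c < nth 0 (sort ge s) i -> (i < count (> c) s)%N.
Proof.
move=> s_ge0 c_ge0 c_lt.
have i_lt : (i < size (sort ge s))%N.
  rewrite ltnNge; apply: contraTN c_lt => /(nth_default 0) ->.
  by rewrite le_gtF.
rewrite -(permP (permEl (perm_sort ge s))) -(cat_take_drop i.+1 (sort ge s)) count_cat.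
apply: leq_trans (leq_addr _ _).
suff: all (> c) (take i.+1 (sort ge s)) by rewrite all_count => /eqP ->; rewrite size_takel.
apply/(all_nthP 0) => l; rewrite size_takel // => l_lt; rewrite nth_take //.
apply: (lt_le_trans c_lt).
have ge_sorted := sort_ge_sorted s_ge0.
have := sorted_leq_nth ge_trans (fun x => lexx x) 0 ge_sorted.
by move=> /(_ l i); apply => //; rewrite inE // (leq_trans l_lt).
Qed.

End SortNonincreasing.

Lemma char_poly_similar (R : comUnitRingType) k (P M : 'M[R]_k) : P \in unitmx ->
  char_poly (invmx P *m M *m P) = char_poly M.
Proof.
move=> P_unit; rewrite /char_poly.
have -> : char_poly_mx (invmx P *m M *m P) =
    map_mx polyC (invmx P) *m char_poly_mx M *m map_mx polyC P.
  rewrite /char_poly_mx mulmxBr mulmxBl -!map_mxM mul_mx_scalar.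
  by rewrite -scalemxAl -map_mxM mulVmx // map_mx1 scalemx1.
rewrite !det_mulmx mulrC mulrA -det_mulmx -map_mxM mulmxV //.
by rewrite map_mx1 det1 mul1r.
Qed.

Lemma row_free_cap_neq0 (F : fieldType) r1 r2 k
    (U : 'M[F]_(r1, k)) (V : 'M[F]_(r2, k)) :
  row_free U -> row_free V -> (k < r1 + r2)%N ->
  exists2 u : 'rV_k, u != 0 & (u <= U)%MS && (u <= V)%MS.
Proof.
move=> /eqP U_rk /eqP V_rk k_lt.
have : (0 < \rank (U :&: V))%N.
  have := mxrank_sum_cap U V; have := rank_leq_col (U + V)%MS; lia.
rewrite lt0n mxrank_eq0 => /rowV0Pn[u]; rewrite sub_capmx => /andP[uU uV] u_neq0.
by exists u; rewrite ?uU.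
Qed.

Lemma rowsub_unitarymx (C : numClosedFieldType) r m n (f : 'I_r -> 'I_m)
    (U : 'M[C]_(m, n)) :
  injective f -> U \is unitarymx -> rowsub f U \is unitarymx.
Proof.
move=> f_inj /row_unitarymxP U_rows; apply/row_unitarymxP => i j.
by rewrite !row_rowsub U_rows (inj_eq f_inj).
Qed.

Lemma dotmx_unitary (C : numClosedFieldType) k (U : 'M[C]_k) (u : 'rV_k) :
  U \is unitarymx -> '[u *m U^t*] = '[u].
Proof. by move=> U_unitary; rewrite !dotmxE trmx_mul map_mxM trmxCK mulmxA mulmxKtV. Qed.

Section GramSpectrum.
Variables (C : numClosedFieldType) (p k : nat) (X : 'M[C]_(p, k)).
Local Notation G := (X^t* *m X).
Local Notation P := (spectralmx G).
Local Notation d := (spectral_diag G).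

Lemma gram_hermsymmx : G \is hermsymmx.
Proof.
apply/is_hermitianmxP; rewrite expr0 scale1r trmx_mul map_mxM.
by rewrite map_trmx trmxK -map_mx_comp (map_mx_id (@conjCK _)).
Qed.

Lemma gram_spectral : G = P^t* *m diag_mx d *m P.
Proof.
have /orthomx_spectralP G_def := hermitian_normalmx gram_hermsymmx.
by rewrite -invmx_unitary ?spectral_unitarymx.
Qed.

Lemma dotmx_mul_gram (u : 'rV[C]_k) :
  '[u *m X^t*] = \sum_j d 0 j * ((u *m P^t*) 0 j * ((u *m P^t*) 0 j)^*).
Proof.
set w := u *m P^t*.
have -> : '[u *m X^t*] = (w *m diag_mx d *m w^t*) 0 0.
  rewrite dotmxE /w !trmx_mul !map_mxM !trmxCK !mulmxA -(mulmxA u).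
  by rewrite {1}gram_spectral !mulmxA.
by rewrite mxE; apply: eq_bigr => j _; rewrite mul_mx_diag !mxE mulrCA mulrA.
Qed.

Lemma gram_spectral_diag_ge0 j : 0 <= d 0 j.
Proof.
have : 0 <= '[row j P *m X^t*] := dnorm_ge0 _ _.
rewrite dotmx_mul_gram.
have -> : row j P *m P^t* = delta_mx 0 j.
  by rewrite -row_mul (unitarymxP (spectral_unitarymx G)) rowE mulmx1.
rewrite (bigD1 j) //= big1 ?addr0 => [|i /negbTE ij].
  by rewrite mxE !eqxx conjC1 !mulr1.
by rewrite mxE ij andbF conjC0 !mulr0.
Qed.

Lemma eigvals_gram : perm_eq (eigvals G) [seq d 0 j | j : 'I_k].
Proof.
have P_unit := spectral_unit G.
apply: prod_XsubC_eq; rewrite big_image /=.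
rewrite -(eqP (xchooseP (char_poly_split G))) {1}gram_spectral.
rewrite -invmx_unitary ?spectral_unitarymx // char_poly_similar //.
by rewrite char_poly_trig ?diag_mx_is_trig //; apply: eq_bigr => j _; rewrite mxE eqxx.
Qed.

Local Notation sqrt_eigs := [seq sqrtC z | z <- eigvals G].

Lemma sqrt_eigvals_gram_perm : perm_eq sqrt_eigs [seq sqrtC (d 0 j) | j : 'I_k].
Proof. by have := perm_map sqrtC eigvals_gram; rewrite -map_comp. Qed.

Lemma sqrt_eigvals_gram_ge0 : all (>= 0) sqrt_eigs.
Proof.
rewrite (perm_all _ sqrt_eigvals_gram_perm); apply/allP => _ /mapP[j _ ->].
by rewrite sqrtC_ge0 gram_spectral_diag_ge0.
Qed.

Lemma singval_ge0 j : 0 <= singval j X.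
Proof.
rewrite /singval /svals; set s := sort _ _; have [j_lt|j_ge] := ltnP j.-1 (size s).
  by move: (mem_nth 0 j_lt); rewrite mem_sort => /(allP sqrt_eigvals_gram_ge0).
by rewrite nth_default.
Qed.

Lemma sqrt_gram_spectral_diag_le_norm2 j : sqrtC (d 0 j) <= norm2 X.
Proof.
apply: (le_nth0_sort_ge sqrt_eigvals_gram_ge0).
by rewrite (perm_mem sqrt_eigvals_gram_perm); apply: map_f; rewrite mem_enum.
Qed.

Lemma lt_singval_card c j : 0 <= c -> c < singval j X ->
  (j.-1 < #|[pred i | (c < sqrtC (d 0 i))%R]|)%N.
Proof.
move=> c_ge0 /(lt_nth_sort_ge_count sqrt_eigvals_gram_ge0 c_ge0).
rewrite (permP sqrt_eigvals_gram_perm) count_map cardE /enum_mem size_filter.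
by rewrite count_filter; under eq_count => i do rewrite /= !inE andbT.
Qed.

Lemma dotmx_mul_ctr_le u : '[u *m X^t*] <= norm2 X ^+ 2 * '[u].
Proof.
rewrite dotmx_mul_gram -(dotmx_unitary u (spectral_unitarymx G)) dotmxE mxE mulr_sumr.
apply: ler_sum => j _; rewrite !mxE; apply: ler_wpM2r; first exact: mul_conjC_ge0.
have sqrt_le := sqrt_gram_spectral_diag_le_norm2 j.
rewrite -[d 0 j]sqrtCK lerXn2r ?nnegrE ?sqrtC_ge0 ?gram_spectral_diag_ge0 //.
by rewrite (le_trans _ sqrt_le) ?sqrtC_ge0 ?gram_spectral_diag_ge0.
Qed.

Lemma dotmx_mul_ctr_gt c u : 0 <= c -> u != 0 ->
    (forall j, ~~ (c < sqrtC (d 0 j)) -> (u *m P^t*) 0 j = 0) ->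
  c ^+ 2 * '[u] < '[u *m X^t*].
Proof.
move=> c_ge0 u_neq0; set w := u *m P^t* => w_small.
have w_neq0 : w != 0.
  apply: contraNneq u_neq0 => w0.
  by rewrite -(mulmxKtV u (spectral_unitarymx G)) // -/w w0 mul0mx.
have [j0 wj0_neq0] := rV0Pn _ w_neq0.
have c2_lt j : c < sqrtC (d 0 j) -> c ^+ 2 < d 0 j.
  by move=> /(ltrXn2r 2 c_ge0); rewrite sqrtCK.
have c_lt_j0 : c < sqrtC (d 0 j0) by apply: contraNT wj0_neq0 => /w_small ->.
rewrite -subr_gt0 dotmx_mul_gram -(dotmx_unitary u (spectral_unitarymx G)) dotmxE.
have wT j : (w^t*) j 0 = (w 0 j)^* by rewrite !mxE.
rewrite -/w mxE mulr_sumr -sumrB (bigD1 j0) //= ltr_wpDr ?sumr_ge0 // => [j _|].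
  rewrite wT -mulrBl; have [/c2_lt c2_lt_j|/w_small ->] := boolP (c < sqrtC (d 0 j)).
    by rewrite mulr_ge0 ?mul_conjC_ge0 // subr_ge0 ltW.
  by rewrite mul0r mulr0.
by rewrite wT -mulrBl mulr_gt0 ?mul_conjC_gt0 // subr_gt0 c2_lt.
Qed.

(* The rows of P indexed by I span the eigenvectors of X^* X with eigenvalue
   > c^2, and that span meets W by a dimension count. *)
Lemma exists_dotmx_mul_ctr_gt c r (W : 'M[C]_(r, k)) : 0 <= c -> row_free W ->
    (k < #|[pred i | (c < sqrtC (d 0 i))%R]| + r)%N ->
  exists2 u, u != 0 & (u <= W)%MS && (c ^+ 2 * '[u] < '[u *m X^t*]).
Proof.
set I := [pred i | _] => c_ge0 W_free k_lt.
pose E := rowsub (fun l : 'I_#|I| => enum_val l) P.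
have E_free : row_free E.
  rewrite /row_free mxrank_unitary ?rowsub_unitarymx ?spectral_unitarymx //.
  exact: enum_val_inj.
have [u u_neq0 /andP[uE uW]] := row_free_cap_neq0 E_free W_free k_lt.
exists u; rewrite // uW dotmx_mul_ctr_gt // => j j_notin_I.
have [a ->] := submxP uE; rewrite -mulmxA mul_rowsub_mx.
rewrite (unitarymxP (spectral_unitarymx G)) mxE big1 // => l _.
have /negbTE fl_neq_j : enum_val l != j.
  by apply: contraNneq j_notin_I => <-; exact: (enum_valP l).
by rewrite !mxE fl_neq_j mulr0.
Qed.

End GramSpectrum.

Section BlockUpperTriangular.
Variables (C : numClosedFieldType) (m k : nat).
Variables (M : 'M[C]_m) (X : 'M[C]_(m, k)) (Y : 'M[C]_k).

Lemma dotmx_row_mx0 (u : 'rV[C]_m) : '[row_mx u (0 : 'rV_k)] = '[u].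
Proof.
by rewrite !dotmxE tr_row_mx map_col_mx mul_row_col trmx0 map_mx0 mulmx0 addr0.
Qed.

Lemma row_mx0_mul_ctr_block (u : 'rV[C]_m) :
  row_mx u 0 *m (block_mx M X 0 Y)^t* = row_mx (u *m M^t*) (0 : 'rV_k).
Proof.
rewrite tr_block_mx map_block_mx mul_row_block !trmx0 !map_mx0.
by rewrite !mul0mx !addr0 mulmx0.
Qed.

Lemma singval_block_ut_le_norm2 j : (k < j)%N -> singval j (block_mx M X 0 Y) <= norm2 M.
Proof.
move=> k_lt_j; set c := norm2 M; have c_ge0 : 0 <= c := singval_ge0 _ _.
rewrite real_leNgt ?ger0_real ?singval_ge0 //.
apply/negP => /(lt_singval_card c_ge0) card_gt.
have W_free : row_free (row_mx 1%:M 0 : 'M[C]_(m, m + k)).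
  by rewrite /row_free rank_row_mx0 mxrank1.
have [|u u_neq0 /andP[uW]] :=
  exists_dotmx_mul_ctr_gt (X := block_mx M X 0 Y) c_ge0 W_free.
  by move: card_gt; set s := #|_|; lia.
have [a ->] := submxP uW; rewrite mul_mx_row mulmx1 mulmx0.
rewrite row_mx0_mul_ctr_block !dotmx_row_mx0.
by move=> /lt_le_trans/(_ (dotmx_mul_ctr_le M a)); rewrite ltxx.
Qed.

End BlockUpperTriangular.

Theorem mainTheorem4 (R : rcfType) (n m : nat)
  (A : 'M[R[i]]_n) (B : 'M[R[i]]_(n, m)) (C : 'M[R[i]]_(m, n)) (D : 'M[R[i]]_m)
  (l1 l2 l3 : R[i]) :
  (3 <= m)%N ->
  l1 != l2 -> l1 != l3 -> l2 != l3 ->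
  ~~ eigenvalue A l1 -> ~~ eigenvalue A l2 -> ~~ eigenvalue A l3 ->
  forall g12 g13 g23 : R[i],
  singval (3 * m - 2)%N (S3 A B C D l1 l2 l3 g12 g13 g23) <=
    Num.max (norm2 (Mmat A B C D l1))
            (Num.max (norm2 (Mmat A B C D l2)) (norm2 (Mmat A B C D l3))).
Proof.
move=> m_ge3 _ _ _ _ _ _ g12 g13 g23.
apply: le_trans (singval_block_ut_le_norm2 _ _ _ _) _; first lia.
have norm2_real (M : 'M[R[i]]_m) : norm2 M \is Num.real := ger0_real (singval_ge0 _ _).
by rewrite comparable_le_max ?lexx // real_comparable ?max_real ?norm2_real.
Qed.
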